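(* Let $\mathbf{M}$ be a POMDP and $\beta\in[0,1)$. For $k\in\mathbb{N}$ let \[ E_{k,\max}:=\sup_{\mathbf{C}\in\overline{\mathcal{F}}_{k}(\mathbf{M})}\ \sum_{t=2}^{\infty}\beta^{t-2}H^{\mathbf{C}}(S_{t} \mid S^{t-1}). \] Then for all $j\leq k$, $E_{j,\max}\leq E_{k,\max}$.
   Context: A POMDP is $\mathbf{M}=(\mathcal{S},s_I,\mathcal{A},P,\mathcal{Z},O,R)$ with finite state set $\mathcal{S}$, initial state $s_I$, finite action set $\mathcal{A}$, transition probabilities $P(s'|s,a)$, finite observation set $\mathcal{Z}$, observation probabilities $O(z|s)$ and reward $R$. A $k$-FSC is $\mathbf{C}=(\mathcal{Q},q_1,\gamma,\delta)$ with memory states $\mathcal{Q}=\{q_1,\ldots,q_k\}$, initial memory $q_1$, decision function $\gamma:\mathcal{Q}\times\mathcal{Z}\to\Delta(\mathcal{A})$ and memory transition function $\delta:\mathcal{Q}\times\mathcal{Z}\times\mathcal{A}\to\Delta(\mathcal{Q})$. Under $\mathbf{C}$: $S_1=s_I$, $Q_1=q_1$, $Z_t\sim O(\cdot|S_t)$, $A_t\sim\gamma(\cdot|Q_t,Z_t)$, $S_{t+1}\sim P(\cdot|S_t,A_t)$, $Q_{t+1}\sim\delta(\cdot|Q_t,Z_t,A_t)$; $H^{\mathbf{C}}(S_t\mid S^{t-1})$ is the conditional entropy of $S_t$ given $(S_1,\ldots,S_{t-1})$ in this process. $\overline{\mathcal{F}}_k(\mathbf{M})$ is the set of $k$-FSCs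 (with arbitrary $\gamma$) whose memory transition function is $\overline{\delta}$ given by: for all $z\in\mathcal{Z}$, $a\in\mathcal{A}$, $\overline{\delta}(q_{i+1}|q_i,z,a)=1$ for $1\le i<k$, $\overline{\delta}(q_k|q_k,z,a)=1$, and $\overline{\delta}(q_i|q_j,z,a)=0$ otherwise. *)

From HB Require Import structures.
From mathcomp Require Import all_boot all_order all_algebra.
From mathcomp Require Import all_classical all_reals all_analysis.
Set Implicit Arguments. Unset Strict Implicit. Unset Printing Implicit Defensive.
Import Order.TTheory GRing.Theory Num.Theory.
Local Open Scope ring_scope.

Section POMDP.
Variables (R : realType) (S A Z : finType).

(* A POMDP: initial state sI, transition P s a s' = P(s'|s,a),
   observation O s z = O(z|s), reward Rw (irrelevant here). *)
Definition pomdp_wf (P : S -> A -> S -> R) (O : S -> Z -> R) : Prop :=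
  (forall s a s', 0 <= P s a s') /\ (forall s a, \sum_(s' : S) P s a s' = 1) /\
  (forall s z, 0 <= O s z) /\ (forall s, \sum_(z : Z) O s z = 1).

(* A k-FSC with memory states 'I_k (q_1 is the ordinal 0, q_i is i-1):
   decision function gam q z a = gamma(a|q,z),
   memory transition del q z a q' = delta(q'|q,z,a). *)
Record fsc (k : nat) := FSC {
  gam : 'I_k -> Z -> A -> R;
  del : 'I_k -> Z -> A -> 'I_k -> R }.

Definition fsc_wf k (C : fsc k) : Prop :=
  (forall q z a, 0 <= gam C q z a) /\ (forall q z, \sum_(a : A) gam C q z a = 1) /\
  (forall q z a q', 0 <= del C q z a q') /\
  (forall q z a, \sum_(q' : 'I_k) del C q z a q' = 1).

Definition delta_bar (k : nat) : 'I_k -> Z -> A -> 'I_k -> R :=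
  fun q _ _ q' => ((val q' == minn (val q).+1 k.-1)%N)%:R.

Definition Fbar (k : nat) : set (fsc k) :=
  [set C | fsc_wf C /\ del C = @delta_bar k].

Variables (sI : S) (P : S -> A -> S -> R) (O : S -> Z -> R).

(* joint_pr C l q = Pr(S_t = l_0, ..., S_1 = l_{t-1}, Q_t = q) where
   l is the state path listed most-recent-first and t = size l. *)
Fixpoint joint_pr k (C : fsc k) (l : seq S) (q' : 'I_k) : R :=
  match l with
  | [::] => 0
  | s' :: l' =>
    match l' with
    | [::] => ((s' == sI) && (val q' == 0%N))%:R
    | s :: _ =>
      \sum_(q : 'I_k) joint_pr C l' q *
        \sum_(z : Z) O s z * \sum_(a : A) gam C q z a * P s a s' * del C q z a q'
    end
  end.

Definition path_pr k (C : fsc k) (l : seq S) : R := \sum_(q : 'I_k) joint_pr C l q.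

Definition centr_term (p r : R) : R := if p == 0 then 0 else - (p * ln (p / r)).

Definition cond_entropy k (C : fsc k) (t : nat) : R :=
  \sum_(x : (t.-1).-tuple S) \sum_(s : S)
     centr_term (path_pr C (s :: tval x)) (path_pr C (tval x)).

Definition disc_entropy (beta : R) k (C : fsc k) : \bar R :=
  (\sum_(2 <= t <oo) (beta ^+ (t - 2) * cond_entropy C t)%:E)%E.

Definition E_max (beta : R) (k : nat) : \bar R :=
  ereal_sup [set disc_entropy beta C | C in @Fbar k].

End POMDP.

From HB Require Import structures.
From mathcomp Require Import all_boot all_order all_algebra.
From mathcomp Require Import all_classical all_reals all_analysis.
Set Implicit Arguments. Unset Strict Implicit.
Unset Printing Implicit Defensive.
Import Order.TTheory GRing.Theory Num.Theory.
Local Open Scope ring_scope.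

(* Any controller with a j-state counter memory is simulated by a controller
   with a k-state counter memory that reads its counter through
   q |-> min(q, j-1): this projection maps the k-counter onto the j-counter,
   so the memory of the larger controller lumps onto that of the smaller one
   and both induce the same law of the state process.  Hence every value in
   the supremum defining E_{j,max} also occurs in the one defining E_{k,max}. *)

Lemma sumr_indicator (R : pzSemiRingType) (T : finType) (F : pred T) (x : T) :
  \sum_(i | F i) ((i == x)%:R : R) = (F x)%:R.
Proof.
rewrite big_mkcond (bigD1 x) //= eqxx big1 ?addr0; first by case: (F x).
by move=> i /negPf ->; case: (F i).
Qed.

Lemma sum_fibers (R : nmodType) (I J : finType) (f : I -> J) (F : I -> R) :
  \sum_j \sum_(i | f i == j) F i = \sum_i F i.
Proof. by rewrite [RHS](partition_big f xpredT). Qed.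

Section MemoryLumping.
Variables (R : realType) (S A Z : finType) (sI : S).
Variables (P : S -> A -> S -> R) (O : S -> Z -> R).

Definition mem_step k (C : fsc R A Z k) (s s' : S) (q q' : 'I_k) : R :=
  \sum_(z : Z) O s z * \sum_(a : A) gam C q z a * P s a s' * del C q z a q'.

Variables (m n : nat) (C' : fsc R A Z m.+1) (C : fsc R A Z n.+1).
Variable f : 'I_m.+1 -> 'I_n.+1.
Hypothesis f0 : f ord0 = ord0.
Hypothesis gam_f : forall q, gam C' q = gam C (f q).
Hypothesis del_f : forall q z a q0,
  \sum_(q' | f q' == q0) del C' q z a q' = del C (f q) z a q0.

Lemma mem_step_lump s s' q q0 :
  \sum_(q' | f q' == q0) mem_step C' s s' q q' = mem_step C s s' (f q) q0.
Proof.
rewrite exchange_big; apply: eq_bigr => z _; rewrite -mulr_sumr.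
congr (_ * _); rewrite exchange_big; apply: eq_bigr => a _.
by rewrite -mulr_sumr del_f gam_f.
Qed.

Lemma joint_pr_lump l q0 :
  joint_pr sI P O C l q0 = \sum_(q' | f q' == q0) joint_pr sI P O C' l q'.
Proof.
elim: l q0 => [|s' l IH] q0 /=; first by rewrite big1.
case: l IH => [|s l] IH.
  case: (s' == sI) => /=; last by rewrite big1.
  by rewrite (sumr_indicator _ (fun q => f q == q0) ord0) f0 eq_sym.
rewrite -[LHS]/(\sum_q joint_pr sI P O C (s :: l) q * mem_step C s s' q q0).
rewrite -[RHS]/(\sum_(q'' | f q'' == q0) \sum_q'
                  joint_pr sI P O C' (s :: l) q' * mem_step C' s s' q' q'').
transitivity
  (\sum_q' joint_pr sI P O C' (s :: l) q' * mem_step C s s' (f q') q0).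
  rewrite -[X in _ = X](sum_fibers f); apply: eq_bigr => q _.
  by rewrite IH mulr_suml; apply: eq_bigr => q' /eqP ->.
rewrite exchange_big; apply: eq_bigr => q' _.
by rewrite -mulr_sumr mem_step_lump.
Qed.

Lemma path_pr_lump l : path_pr sI P O C l = path_pr sI P O C' l.
Proof.
by rewrite /path_pr (eq_bigr _ (fun q _ => joint_pr_lump l q)) sum_fibers.
Qed.

Lemma disc_entropy_lump beta :
  disc_entropy sI P O beta C = disc_entropy sI P O beta C'.
Proof.
apply: eq_eseriesr => t _; congr (_ * _)%:E.
by apply: eq_bigr => x _; apply: eq_bigr => s _; rewrite !path_pr_lump.
Qed.

End MemoryLumping.

Section Counter.
Variables (R : realType) (A Z : finType).

Definition counter_next n (q : 'I_n.+1) : 'I_n.+1 := inord (minn q.+1 n).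

Lemma delta_barE n (q : 'I_n.+1) (z : Z) (a : A) q' :
  delta_bar R q z a q' = (q' == counter_next q)%:R.
Proof.
rewrite /delta_bar /counter_next -val_eqE /= inordK // ltnS.
exact: geq_minr.
Qed.

Lemma delta_bar_ge0 n (q : 'I_n) (z : Z) (a : A) q' : 0 <= delta_bar R q z a q'.
Proof. exact: ler0n. Qed.

Lemma sum_delta_bar n (q : 'I_n.+1) (z : Z) (a : A) :
  \sum_q' delta_bar R q z a q' = 1.
Proof.
under eq_bigr do rewrite delta_barE.
exact: (sumr_indicator _ xpredT).
Qed.

Variables (j k : nat) (hjk : (j <= k)%N).

Definition counter_proj (q : 'I_k.+1) : 'I_j.+1 := inord (minn q j).

Lemma counter_proj0 : counter_proj ord0 = ord0.
Proof. by apply: val_inj; rewrite /counter_proj /= min0n inordK. Qed.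

Lemma counter_proj_next q :
  counter_proj (counter_next q) = counter_next (counter_proj q).
Proof.
apply: val_inj; rewrite /= !inordK ?ltnS ?geq_minr //.
by rewrite -minnA (minn_idPr hjk) -minnSS -minnA (minn_idPr (leqnSn j)).
Qed.

Definition counter_lift (C : fsc R A Z j.+1) : fsc R A Z k.+1 :=
  FSC (fun q => gam C (counter_proj q)) (@delta_bar R A Z k.+1).

Lemma counter_lift_Fbar C : Fbar C -> Fbar (counter_lift C).
Proof.
move=> [[gam_ge0 [sum_gam _]] _]; split=> //.
split; [|split; [|split]] => /= *.
- exact: gam_ge0.
- exact: sum_gam.
- exact: delta_bar_ge0.
- exact: sum_delta_bar.
Qed.

Lemma disc_entropy_counter_lift (S : finType) (sI : S) P O beta C :
  del C = @delta_bar R A Z j.+1 ->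
  disc_entropy sI P O beta (counter_lift C) = disc_entropy sI P O beta C.
Proof.
move=> delC; symmetry.
apply: (disc_entropy_lump sI P O counter_proj0) => // q z a q0.
rewrite delC delta_barE /= -counter_proj_next eq_sym.
rewrite (eq_bigr _ (fun q' _ => delta_barE q z a q')).
exact: (sumr_indicator _ (fun q' => counter_proj q' == q0)).
Qed.

End Counter.

Theorem lemma2 (R : realType) (S A Z : finType) (sI : S)
  (P : S -> A -> S -> R) (O : S -> Z -> R) (Rw : S -> A -> R)
  (hM : pomdp_wf P O) (beta : R) (hb0 : 0 <= beta) (hb1 : beta < 1)
  (j k : nat) (hj : (0 < j)%N) (hjk : (j <= k)%N) :
  (E_max sI P O beta j <= E_max sI P O beta k)%E.
Proof.
case: j hj hjk => // j _; case: k => // k; rewrite ltnS => hjk.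
apply: ereal_sup_le => _ [C FC <-].
exists (counter_lift k C); first exact: counter_lift_Fbar.
by apply: (disc_entropy_counter_lift hjk); case: FC.
Qed.
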